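(* Let $\Sigma=(X,\mathcal D,\phi)$ be an RFC system. If there is a bounded uniformly globally weakly attractive set $\mathcal A\subset X$, then $\Sigma$ is Lagrange stable.
   Context: $\mathbb R_+=[0,\infty)$. A system is a triple $\Sigma=(X,\mathcal D,\phi)$ where $(X,\|\cdot\|)$ is a normed linear space; $D$ is a nonempty subset of some normed linear space; $\mathcal D$ is a set of functions $d:\mathbb R_+\to D$ closed under time shifts $d\mapsto d(\cdot+\tau)$, $\tau\ge0$, and under concatenation ($d(s)=d_1(s)$ for $s\in[0,t]$, $d(s)=d_2(s-t)$ for $s>t$, any $d_1,d_2\in\mathcal D$, $t>0$); and $\phi:\mathbb R_+\times X\times\mathcal D\to X$ is an everywhere defined map with $\phi(0,x,d)=x$; $\phi(t,x,d)=\phi(t,x,\tilde d)$ whenever $d=\tilde d$ on $[0,t]$; $t\mapsto\phi(t,x,d)$ continuous; and $\phi(h,\phi(t,x,d),d(t+\cdot))=\phi(t+h,x,d)$ for all $t,h\ge0$. $\|x\|_{\mathcal A}=\inf_{y\in\mathcal A}\|x-y\|$. $\mathcal K_\infty$: continuous strictly increasing unbounded $\gamma:\mathbb R_+\to\mathbb R_+$ with $\gamma(0)=0$. $\Sigma$ is RFC if for all $C,\tau>0$: $\sup\{\|\phi(t,x,d)\|:\|x\|\le C,d\in\mathcal D,t\in[0,\tau]\}<\infty$. $\mathcal A$ is uniformly globally weakly attractive if for all $\varepsilon,r>0$ there is $\tau$ such that for all $x$ with $\|x\|_{\mathcal A}\le r$ and all $d\in\mathcal D$ there exists $t\le\tau$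 with $\|\phi(t,x,d)\|_{\mathcal A}\le\varepsilon$. $\Sigma$ is Lagrange stable if there is a bounded set $\mathcal B\subset X$, $\sigma\in\mathcal K_\infty$ and $c>0$ with $\|\phi(t,x,d)\|_{\mathcal B}\le\sigma(\|x\|_{\mathcal B})+c$ for all $x\in X,t\ge0,d\in\mathcal D$ (equivalently, with $\mathcal B=\{0\}$). *)

From HB Require Import structures.
From mathcomp Require Import all_boot all_order all_algebra.
From mathcomp Require Import all_classical all_reals all_analysis.
Set Implicit Arguments. Unset Strict Implicit. Unset Printing Implicit Defensive.
Import Order.TTheory GRing.Theory Num.Theory.
Import numFieldNormedType.Exports.
Local Open Scope classical_set_scope.
Local Open Scope ring_scope.

Section Defs.
Variable R : realType.

Lemma tdiff_ge0 (s t : {nonneg R}) : 0 <= Num.max (s%:num - t%:num) 0.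
Proof. by rewrite le_max lexx orbT. Qed.
Definition tdiff (s t : {nonneg R}) : {nonneg R} := NngNum (tdiff_ge0 s t).

Definition tadd (s t : {nonneg R}) : {nonneg R} := (s%:num + t%:num)%:nng.

Variable U : normedModType R.

Definition dshift (d : {nonneg R} -> U) (tau : {nonneg R}) : {nonneg R} -> U :=
  fun s => d (tadd s tau).

Definition dconcat (d1 d2 : {nonneg R} -> U) (t : {nonneg R}) : {nonneg R} -> U :=
  fun s => if s%:num <= t%:num then d1 s else d2 (tdiff s t).

Variable X : normedModType R.

Definition is_system (Dset : set U) (Dis : set ({nonneg R} -> U))
    (phi : {nonneg R} -> X -> ({nonneg R} -> U) -> X) : Prop :=
  Dset !=set0 /\
      (forall d, Dis d -> forall s, Dset (d s)) /\
      (forall d tau, Dis d -> Dis (dshift d tau)) /\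
      (forall d1 d2 (t : {nonneg R}), Dis d1 -> Dis d2 -> 0 < t%:num ->
          Dis (dconcat d1 d2 t)) /\
      (forall x d, Dis d -> phi 0%:nng x d = x) /\
      (forall t x d d', Dis d -> Dis d' ->
          (forall s : {nonneg R}, s%:num <= t%:num -> d s = d' s) ->
          phi t x d = phi t x d') /\
      (forall x d, Dis d -> forall (t : {nonneg R}) (eps : R), 0 < eps ->
          exists2 delta : R, 0 < delta &
            forall s : {nonneg R}, `|s%:num - t%:num| < delta ->
              `|phi s x d - phi t x d| < eps) /\
      (forall t h x d, Dis d ->
          phi h (phi t x d) (dshift d t) = phi (tadd t h) x d).

Definition dist_set (A : set X) (x : X) : R := inf [set `|x - y| | y in A].

Definition bounded_X (A : set X) : Prop := exists M : R, forall y, A y -> `|y| <= M.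

Definition RFC (Dis : set ({nonneg R} -> U))
    (phi : {nonneg R} -> X -> ({nonneg R} -> U) -> X) : Prop :=
  forall C tau : R, 0 < C -> 0 < tau ->
    exists M : R, forall x d (t : {nonneg R}),
      `|x| <= C -> Dis d -> t%:num <= tau -> `|phi t x d| <= M.

Definition UGWA (Dis : set ({nonneg R} -> U))
    (phi : {nonneg R} -> X -> ({nonneg R} -> U) -> X) (A : set X) : Prop :=
  forall eps r : R, 0 < eps -> 0 < r ->
    exists tau : R, forall x d, dist_set A x <= r -> Dis d ->
      exists t : {nonneg R}, t%:num <= tau /\ dist_set A (phi t x d) <= eps.

End Defs.

Definition K_inf (R : realType) (sigma : R -> R) : Prop :=
  [/\ {within [set x : R | 0 <= x], continuous sigma},
      (forall a b : R, 0 <= a -> a < b -> sigma a < sigma b),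
      (forall M : R, exists2 s : R, 0 <= s & M < sigma s) &
      sigma 0 = 0].

Definition Lagrange_stable (R : realType) (U X : normedModType R)
    (Dis : set ({nonneg R} -> U))
    (phi : {nonneg R} -> X -> ({nonneg R} -> U) -> X) : Prop :=
  exists (B : set X) (sigma : R -> R) (c : R),
    [/\ B !=set0, bounded_X B, K_inf sigma, 0 < c &
        forall x d (t : {nonneg R}), Dis d ->
          dist_set B (phi t x d) <= sigma (dist_set B x) + c].

From HB Require Import structures.
From mathcomp Require Import all_boot all_order all_algebra.
From mathcomp Require Import all_classical all_reals all_analysis.
From mathcomp Require Import lra.
Import Order.TTheory GRing.Theory Num.Theory.
Import numFieldNormedType.Exports.
Local Open Scope classical_set_scope.
Local Open Scope ring_scope.
Set Implicit Arguments. Unset Strict Implicit. Unset Printing Implicit Defensive.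

(* Call the points at distance at most 1 from the bounded set A the capture
   set.  By RFC a trajectory from the capture set stays bounded for unit time,
   after which uniform weak attractivity brings it back to the capture set
   within a uniform time; chaining these returns through the cocycle property
   bounds every trajectory from the capture set by one constant.  Every ball
   reaches the capture set uniformly fast, so the trajectories from the ball of
   radius n+1 are bounded by some G(n).  Finally s plus a locally finite sum of
   unit ramps with coefficients |G(k+1)| is a K_inf function dominating G up to
   a constant, which gives the Lagrange bound with B = {0}. *)

Section DistanceToSet.
Variables (R : realType) (X : normedModType R).

Lemma dist_set_le (A : set X) x y : A y -> dist_set A x <= `|x - y|.
Proof.
move=> Ay; apply: ge_inf; last by exists y.
by exists 0 => _ [z _ <-]; exact: normr_ge0.
Qed.

Lemma dist_set_lt (A : set X) x (e : R) :
  A !=set0 -> dist_set A x < e -> exists2 y, A y & `|x - y| < e.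
Proof.
move=> [y0 Ay0] /inf_lt [|_ [y Ay <-] xy_lt]; last by exists y.
by exists `|x - y0|, y0.
Qed.

Lemma dist_set0 (x : X) : dist_set [set 0] x = `|x|.
Proof. by rewrite /dist_set image_set1 subr0 inf1. Qed.

Variables (A : set X) (M : R).
Hypotheses (A_neq0 : A !=set0) (A_le : forall y, A y -> `|y| <= M).

Lemma dist_set_le_norm x : dist_set A x <= `|x| + M.
Proof.
have [y Ay] := A_neq0; apply: le_trans (dist_set_le x Ay) _.
by have := A_le Ay; have := ler_normB x y; lra.
Qed.

Lemma norm_le_dist_set x e : dist_set A x <= e -> `|x| <= M + e.
Proof.
move=> dist_le; apply/ler_addgt0Pr => eps eps_gt0.
have [y Ay xy_lt] : exists2 y, A y & `|x - y| < e + eps.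
  by apply: dist_set_lt => //; lra.
by have := A_le Ay; have := ler_normD (x - y) y; rewrite subrK; lra.
Qed.

End DistanceToSet.

Section RampMajorant.
Variable R : realType.

Definition ramp (u : R) : R := Num.min (Num.max u 0) 1.

Lemma ramp_ge0 u : 0 <= ramp u.
Proof. by rewrite /ramp le_min le_max lexx orbT ler01. Qed.

Lemma le_ramp u v : u <= v -> ramp u <= ramp v.
Proof. by move=> uv; rewrite /ramp le_min !ge_min !le_max !ge_max; lra. Qed.

Lemma ramp_eq0 u : u <= 0 -> ramp u = 0.
Proof. by move=> u_le0; rewrite /ramp (max_idPr u_le0) (min_idPl ler01). Qed.

Lemma ramp_eq1 u : 1 <= u -> ramp u = 1.
Proof.
by move=> u_ge1; rewrite /ramp (max_idPl (le_trans ler01 u_ge1)) (min_idPr u_ge1).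
Qed.

Lemma continuous_ramp : continuous ramp.
Proof.
apply: min_fun_continuous; last by move=> x; exact: cvg_cst.
by apply: max_fun_continuous => x; [exact: cvg_id | exact: cvg_cst].
Qed.

Definition rampsum (a : nat -> R) (n : nat) (s : R) : R :=
  \sum_(k < n) a k * ramp (s - k%:R).

Lemma rampsum_widen a n m s :
  s <= n%:R -> (n <= m)%N -> rampsum a m s = rampsum a n s.
Proof.
move=> s_le nm; rewrite /rampsum.
rewrite (big_ord_widen m (fun k => a k * ramp (s - k%:R)) nm) [RHS]big_mkcond /=.
apply: eq_bigr => k _; case: ifPn => //; rewrite -leqNgt => nk.
by rewrite ramp_eq0 ?mulr0 // subr_le0 (le_trans s_le) // ler_nat.
Qed.

Lemma continuous_rampsum a n : continuous (rampsum a n).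
Proof.
elim: n => [|n IH] s.
  by rewrite /rampsum; under eq_fun do rewrite big_ord0; exact: cvg_cst.
have -> : rampsum a n.+1 = rampsum a n \+ (fun x => a n * ramp (x - n%:R)).
  by apply/funext => x; rewrite /rampsum big_ord_recr.
apply: continuousD; first exact: IH.
apply: continuousM; first exact: cvg_cst.
apply: continuous_comp; last exact: continuous_ramp.
by apply: continuousD; [exact: cvg_id | exact: cvg_cst].
Qed.

Lemma rampsum_ge0 a n s : (forall k, 0 <= a k) -> 0 <= rampsum a n s.
Proof. by move=> a_ge0; apply: sumr_ge0 => k _; rewrite mulr_ge0 ?ramp_ge0. Qed.

Lemma le_rampsum a n s t :
  (forall k, 0 <= a k) -> s <= t -> rampsum a n s <= rampsum a n t.
Proof.
move=> a_ge0 st; apply: ler_sum => k _; apply: ler_wpM2l => //.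
by apply: le_ramp; rewrite lerD2r.
Qed.

Lemma rampsum_ge_coef a n k s :
  (forall i, 0 <= a i) -> (k < n)%N -> k.+1%:R <= s -> a k <= rampsum a n s.
Proof.
move=> a_ge0 kn ks; rewrite /rampsum (bigD1 (Ordinal kn)) //=.
rewrite ramp_eq1 ?mulr1; last by move: ks; rewrite -natr1; lra.
by rewrite lerDl; apply: sumr_ge0 => i _; rewrite mulr_ge0 ?ramp_ge0.
Qed.

(* The series s + \sum_k a k * ramp (s - k), cut off where its remaining
   terms vanish at s. *)
Definition ramp_kinf (a : nat -> R) (s : R) : R :=
  s + rampsum a (Num.truncn s).+1 s.

Lemma ramp_kinfE a n s : s <= n%:R -> ramp_kinf a s = s + rampsum a n s.
Proof.
move=> s_le; rewrite /ramp_kinf; congr (_ + _).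
have s_lt := truncnS_gt s.
case: (leqP n (Num.truncn s).+1) => [n_le|/ltnW n_ge].
  exact: rampsum_widen.
by rewrite (rampsum_widen _ _ n_ge) // ltW.
Qed.

Lemma continuous_ramp_kinf a : continuous (ramp_kinf a).
Proof.
move=> s0; have s0_lt := truncnS_gt s0.
have near_s0 : \forall s \near s0,
    s + rampsum a (Num.truncn s0).+1 s = ramp_kinf a s.
  near=> s; rewrite (@ramp_kinfE a (Num.truncn s0).+1) //.
  by apply: ltW; near: s; exact: lt_nbhsl.
rewrite /continuous_at (ramp_kinfE a (ltW s0_lt)).
apply: cvg_trans (near_eq_cvg near_s0) _.
by apply: continuousD; [exact: cvg_id | exact: continuous_rampsum].
Unshelve. all: end_near.
Qed.

Lemma K_inf_ramp_kinf a : (forall k, 0 <= a k) -> K_inf (ramp_kinf a).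
Proof.
move=> a_ge0; split.
- exact/continuous_subspaceT/continuous_ramp_kinf.
- move=> s t s_ge0 st; have t_lt := truncnS_gt t.
  rewrite (ramp_kinfE a (ltW t_lt)) (ramp_kinfE a (ltW (lt_trans st t_lt))).
  by have := le_rampsum (Num.truncn t).+1 a_ge0 (ltW st); lra.
- move=> N; exists (Num.max N 0 + 1); first by rewrite addr_ge0 ?le_max ?lexx ?orbT.
  have := rampsum_ge0 (Num.truncn (Num.max N 0 + 1)).+1 (Num.max N 0 + 1) a_ge0.
  have : N <= Num.max N 0 by rewrite le_max lexx.
  by rewrite /ramp_kinf; lra.
- by rewrite (ramp_kinfE a (ler0n _ 0)) /rampsum big_ord0 addr0.
Qed.

Lemma exists_K_inf_majorant (G : nat -> R) :
  exists (sigma : R -> R) (c : R), [/\ K_inf sigma, 0 < c &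
    forall s, 0 <= s -> G (Num.truncn s) <= sigma s + c].
Proof.
pose a k := `|G k.+1|; have a_ge0 k : 0 <= a k by exact: normr_ge0.
exists (ramp_kinf a), (`|G 0| + 1); split.
- exact: K_inf_ramp_kinf.
- by rewrite ltr_wpDl.
move=> s s_ge0; have sigma_ge0 : 0 <= ramp_kinf a s.
  by rewrite addr_ge0 ?rampsum_ge0.
case E : (Num.truncn s) => [|m].
  by have := ler_norm (G 0); lra.
have m_le : m.+1%:R <= s by rewrite -E truncn_le.
have := rampsum_ge_coef a_ge0 (leqnSn m.+1) m_le.
have := ler_norm (G m.+1); have := normr_ge0 (G 0).
by rewrite /ramp_kinf E /a in sigma_ge0 *; lra.
Qed.

End RampMajorant.

Section Boundedness.
Variables (R : realType) (U X : normedModType R).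
Variables (Dis : set ({nonneg R} -> U))
  (phi : {nonneg R} -> X -> ({nonneg R} -> U) -> X).
Hypothesis shift_closed : forall d tau, Dis d -> Dis (dshift d tau).
Hypothesis phi_cocycle : forall t h x d, Dis d ->
  phi h (phi t x d) (dshift d t) = phi (tadd t h) x d.

Lemma phi_split x d (t s : {nonneg R}) : Dis d -> s%:num <= t%:num ->
  phi t x d = phi (tdiff t s) (phi s x d) (dshift d s).
Proof.
move=> Dd st; rewrite phi_cocycle //; congr phi; apply/val_inj => /=.
by rewrite (max_idPl _) ?subr_ge0 // addrC subrK.
Qed.

(* Bound on times in [0, n] by induction on n: a return to S takes at least
   unit time, and the trajectory restarts from S there. *)
Lemma bounded_of_recurrent (S : set X) (T K : R) :
  (forall x d (t : {nonneg R}), S x -> Dis d -> t%:num <= T ->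
     `|phi t x d| <= K) ->
  (forall x d, S x -> Dis d ->
     exists t1 : {nonneg R}, [/\ 1 <= t1%:num, t1%:num <= T & S (phi t1 x d)]) ->
  forall x d t, S x -> Dis d -> `|phi t x d| <= K.
Proof.
move=> bounded_T return_S.
suff bounded_n : forall (n : nat) x d (t : {nonneg R}), S x -> Dis d ->
    t%:num <= n%:R -> `|phi t x d| <= K.
  by move=> x d t Sx Dd; apply: (bounded_n (Num.truncn t%:num).+1) => //;
    exact/ltW/truncnS_gt.
elim=> [|n IH] x d t Sx Dd t_le; have [t1 [t1_ge1 t1_le St1]] := return_S x d Sx Dd.
  by apply: bounded_T => //; move: t_le; lra.
have [t_le_t1|t1_lt_t] := leP t%:num t1%:num.
  by apply: bounded_T => //; exact: le_trans t1_le.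
rewrite (phi_split x Dd (ltW t1_lt_t)); apply: IH => //; first exact: shift_closed.
by rewrite /= ge_max ler0n andbT; move: t_le; rewrite -natr1; lra.
Qed.

Variables (A : set X) (M : R).
Hypotheses (A_neq0 : A !=set0) (A_le : forall y, A y -> `|y| <= M).
Hypotheses (rfc : RFC Dis phi) (ugwa : UGWA Dis phi A).

Let M_ge0 : 0 <= M.
Proof. by have [y Ay] := A_neq0; exact: le_trans (A_le Ay). Qed.

Lemma return_to_capture_set : exists T : R, forall x d,
  dist_set A x <= 1 -> Dis d -> exists t1 : {nonneg R},
    [/\ 1 <= t1%:num, t1%:num <= T & dist_set A (phi t1 x d) <= 1].
Proof.
have [K1 K1_bound] := rfc (ltr_wpDl M_ge0 ltr01) ltr01.
have r_gt0 : 0 < `|K1| + M + 1 by have := normr_ge0 K1; have := M_ge0; lra.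
have [tau tau_hit] := ugwa ltr01 r_gt0.
exists (1 + `|tau|) => x d x_near Dd.
have phi1_le : `|phi 1%:nng x d| <= K1.
  by apply: K1_bound => //; exact: norm_le_dist_set x_near.
have phi1_near : dist_set A (phi 1%:nng x d) <= `|K1| + M + 1.
  apply: le_trans (dist_set_le_norm A_neq0 A_le _) _.
  by have := ler_norm K1; lra.
have [t [t_le hit]] := tau_hit _ _ phi1_near (shift_closed 1%:nng Dd).
exists (tadd 1%:nng t); rewrite -phi_cocycle //; split => //=.
- by rewrite lerDl.
- by rewrite lerD2l (le_trans t_le) ?ler_norm.
Qed.

Lemma bounded_from_capture_set : exists K : R, forall x d t,
  dist_set A x <= 1 -> Dis d -> `|phi t x d| <= K.
Proof.
have [T return_A] := return_to_capture_set.
have T_gt0 : 0 < `|T| + 1 by rewrite ltr_wpDl.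
have [K K_bound] := rfc (ltr_wpDl M_ge0 ltr01) T_gt0.
exists K; apply: (bounded_of_recurrent (T := T)) => [x d t x_near Dd t_le|].
  apply: K_bound => //; first exact: norm_le_dist_set x_near.
  by have := ler_norm T; lra.
exact: return_A.
Qed.

Lemma bounded_from_ball (r : R) : 0 < r -> exists K : R, forall x d t,
  `|x| <= r -> Dis d -> `|phi t x d| <= K.
Proof.
move=> r_gt0; have [K K_bound] := bounded_from_capture_set.
have [tau tau_hit] := ugwa ltr01 (ltr_wpDr M_ge0 r_gt0).
have T_gt0 : 0 < `|tau| + 1 by rewrite ltr_wpDl.
have [Kr Kr_bound] := rfc r_gt0 T_gt0.
exists (Num.max Kr K) => x d t x_le Dd; rewrite le_max.
have x_near : dist_set A x <= r + M.
  by have := dist_set_le_norm A_neq0 A_le x; lra.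
have [t0 [t0_le hit]] := tau_hit _ _ x_near Dd.
have [t_le_t0|t0_lt_t] := leP t%:num t0%:num.
  by rewrite Kr_bound //; have := ler_norm tau; lra.
rewrite (phi_split x Dd (ltW t0_lt_t)) K_bound ?orbT //; exact: shift_closed.
Qed.

End Boundedness.

Theorem lemma21 (R : realType) (U X : normedModType R) (Dset : set U)
    (Dis : set ({nonneg R} -> U))
    (phi : {nonneg R} -> X -> ({nonneg R} -> U) -> X) (A : set X) :
  is_system Dset Dis phi -> RFC Dis phi ->
  A !=set0 -> bounded_X A -> UGWA Dis phi A ->
  Lagrange_stable Dis phi.
Proof.
move=> [_ [_ [shift_closed [_ [_ [_ [_ phi_cocycle]]]]]]] rfc A_neq0 [M A_le] ugwa.
have ball_bound (n : nat) : exists K : R, forall x d t,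
    `|x| <= n.+1%:R -> Dis d -> `|phi t x d| <= K.
  exact: (bounded_from_ball shift_closed phi_cocycle A_neq0 A_le rfc ugwa (ltr0Sn R n)).
have [G G_bound] := boolp.choice ball_bound.
have [sigma [c [sigma_Kinf c_gt0 sigma_dom]]] := exists_K_inf_majorant G.
exists [set 0], sigma, c; split => //.
- by exists 0.
- by exists 0 => _ ->; rewrite normr0.
move=> x d t Dd; rewrite !dist_set0.
apply: le_trans (sigma_dom _ (normr_ge0 x)); apply: G_bound => //.
exact/ltW/truncnS_gt.
Qed.
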